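(* Let $\alpha,\beta$ be cardinals with $\alpha>2$ and $\beta>2$. The class of $(\alpha,\beta)$-representable posets is not closed under substructures, i.e. there is an $(\alpha,\beta)$-representable poset $P$ and a subset $P'\subseteq P$ such that $P'$ with the induced order is not $(\alpha,\beta)$-representable.
   Context: For posets $P,Q$, a monotone map $h:P\to Q$ is an $(\alpha,\beta)$-morphism if whenever $S\subseteq P$ with $|S|<\alpha$ and $\bigwedge S$ exists in $P$, then $h(\bigwedge S)=\bigwedge h[S]$, and whenever $T\subseteq P$ with $|T|<\beta$ and $\bigvee T$ exists in $P$, then $h(\bigvee T)=\bigvee h[T]$. A poset $P$ is $(\alpha,\beta)$-representable if there is a set $X$ and an $(\alpha,\beta)$-morphism $h:P\to\wp(X)$ that is an order embedding, where $\wp(X)$ is the power set of $X$ ordered by inclusion. Posets are regarded as structures in the signature with one binary relation $\leq$. *)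

Definition card_le (A B : Type) : Prop :=
  exists f : A -> B, forall x y, f x = f y -> x = y.

(* |A| < |B|  (with choice, equivalent to the usual cardinal order) *)
Definition card_lt (A B : Type) : Prop := card_le A B /\ ~ card_le B A.

Definition card_gt2 (A : Type) : Prop :=
  exists a b c : A, a <> b /\ a <> c /\ b <> c.

Definition is_poset (T : Type) (le : T -> T -> Prop) : Prop :=
  (forall x, le x x) /\
  (forall x y, le x y -> le y x -> x = y) /\
  (forall x y z, le x y -> le y z -> le x z).

Definition is_meet {T : Type} (le : T -> T -> Prop) (S : T -> Prop) (m : T) : Prop :=
  (forall s, S s -> le m s) /\ (forall x, (forall s, S s -> le x s) -> le x m).

Definition is_join {T : Type} (le : T -> T -> Prop) (S : T -> Prop) (j : T) : Prop :=
  (forall s, S s -> le s j) /\ (forall x, (forall s, S s -> le s x) -> le j x).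

Definition pset (X : Type) : Type := X -> Prop.
Definition psubset {X : Type} (U V : pset X) : Prop := forall x, U x -> V x.

Definition image {T U : Type} (h : T -> U) (S : T -> Prop) : U -> Prop :=
  fun u => exists s, S s /\ h s = u.

Definition subset_card_lt {T : Type} (S : T -> Prop) (alpha : Type) : Prop :=
  card_lt {x : T | S x} alpha.

(* (alpha,beta)-morphism P -> Q, cardinals given as types (alpha = |A|, beta = |B|).
   "h(/\S) = /\h[S]" is rendered as: h(m) is the meet of h[S] in Q. *)
Definition ab_morphism (A B : Type) {P Q : Type}
  (leP : P -> P -> Prop) (leQ : Q -> Q -> Prop) (h : P -> Q) : Prop :=
  (forall x y, leP x y -> leQ (h x) (h y)) /\
  (forall (S : P -> Prop) (m : P), subset_card_lt S A -> is_meet leP S m ->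
       is_meet leQ (image h S) (h m)) /\
  (forall (S : P -> Prop) (j : P), subset_card_lt S B -> is_join leP S j ->
       is_join leQ (image h S) (h j)).

Definition ab_representable (A B : Type) (P : Type) (leP : P -> P -> Prop) : Prop :=
  exists (X : Type) (h : P -> pset X),
    ab_morphism A B leP (@psubset X) h /\
    (forall x y, leP x y <-> psubset (h x) (h y)).

Definition induced {P : Type} (leP : P -> P -> Prop) (P' : P -> Prop) :
  {x : P | P' x} -> {x : P | P' x} -> Prop :=
  fun x y => leP (proj1_sig x) (proj1_sig y).

From Stdlib Require Import ClassicalEpsilon ProofIrrelevance FunctionalExtensionality PropExtensionality.

(* The witness is P = the power set of nat, represented by the identity map, and P' the
   diamond M3 formed by the empty set, nat itself and the singletons.  Since alpha, beta > 2,
   a representation of P' must send binary meets and joins to intersections and unions, so it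
   would make M3 distributive: for distinct atoms a, b, c we would get
   a = a /\ (b \/ c) = (a /\ b) \/ (a /\ c) = 0. *)

Definition doubleton {T : Type} (u v : T) : T -> Prop := fun s => s = u \/ s = v.

Lemma card_le_trans (A B C : Type) : card_le A B -> card_le B C -> card_le A C.
Proof.
  intros [f Hf] [g Hg]. exists (fun x => g (f x)). auto.
Qed.

Lemma card_le_bool (A : Type) (a b : A) : a <> b -> card_le bool A.
Proof.
  intros Hab. exists (fun x : bool => if x then a else b).
  intros [|] [|] E; congruence.
Qed.

Lemma card_gt2_not_le_bool (A : Type) : card_gt2 A -> ~ card_le A bool.
Proof.
  intros [a [b [c [Hab [Hac Hbc]]]]] [f Hf].
  destruct (f a) eqn:Ea, (f b) eqn:Eb, (f c) eqn:Ec;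
    first [ apply Hab, Hf; congruence | apply Hac, Hf; congruence
          | apply Hbc, Hf; congruence ].
Qed.

Lemma doubleton_card_le_bool (T : Type) (u v : T) : card_le {x | doubleton u v x} bool.
Proof.
  exists (fun x => if excluded_middle_informative (proj1_sig x = u) then true else false).
  intros [x [->| ->]] [y [->| ->]]; cbn;
    destruct (excluded_middle_informative (u = u)), (excluded_middle_informative (v = u));
    intros E; try discriminate; apply subset_eq_compat; congruence.
Qed.

Lemma subset_card_lt_doubleton (T A : Type) (u v : T) :
  card_gt2 A -> subset_card_lt (doubleton u v) A.
Proof.
  intros HA. split.
  - destruct HA as [a [b [_ [Hab _]]]].
    exact (card_le_trans _ _ _ (doubleton_card_le_bool T u v) (card_le_bool A a b Hab)).
  - intros HAd.
    exact (card_gt2_not_le_bool A HA (card_le_trans _ _ _ HAd (doubleton_card_le_bool T u v))).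
Qed.

Lemma pset_is_poset (X : Type) : is_poset (pset X) psubset.
Proof.
  split; [|split].
  - intros U x Hx; exact Hx.
  - intros U V HUV HVU. apply functional_extensionality; intros x.
    apply propositional_extensionality; split; auto.
  - intros U V W HUV HVW x Hx; auto.
Qed.

Lemma image_id {T : Type} (S : T -> Prop) (s : T) : image (fun x => x) S s <-> S s.
Proof.
  split; [intros [s0 [Hs0 <-]] | exists s]; auto.
Qed.

Lemma pset_ab_representable (A B X : Type) : ab_representable A B (pset X) psubset.
Proof.
  exists X, (fun U => U). split; [split; [|split] | intros U V; reflexivity].
  - auto.
  - intros S m _ [Hlow Hglb]. split.
    + intros s Hs; apply Hlow, image_id, Hs.
    + intros x Hx; apply Hglb; intros s Hs; apply Hx, image_id, Hs.
  - intros S j _ [Hupp Hlub]. split.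
    + intros s Hs; apply Hupp, image_id, Hs.
    + intros x Hx; apply Hlub; intros s Hs; apply Hx, image_id, Hs.
Qed.

Lemma pset_meet_contains_inter (X : Type) (S : pset X -> Prop) (M : pset X) (x : X) :
  is_meet psubset S M -> (forall s, S s -> s x) -> M x.
Proof.
  intros [_ Hglb] Hx. apply (Hglb (fun y => forall s, S s -> s y)); [|exact Hx].
  intros s Hs y Hy; exact (Hy s Hs).
Qed.

Lemma pset_join_within_union (X : Type) (S : pset X -> Prop) (J : pset X) (x : X) :
  is_join psubset S J -> J x -> exists s, S s /\ s x.
Proof.
  intros [_ Hlub] Hx. apply (Hlub (fun y => exists s, S s /\ s y)); auto.
  intros s Hs y Hy; eauto.
Qed.

Section RepresentableDistributive.

Variables (A B P X : Type) (le : P -> P -> Prop) (h : P -> pset X).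
Hypothesis h_morphism : ab_morphism A B le psubset h.
Hypothesis A_gt2 : card_gt2 A.
Hypothesis B_gt2 : card_gt2 B.

Lemma ab_morphism_meet2 (a b m : P) (x : X) :
  is_meet le (doubleton a b) m -> h a x -> h b x -> h m x.
Proof.
  intros Hm Ha Hb. destruct h_morphism as [_ [Hmeet _]].
  apply (pset_meet_contains_inter _ _ _ _
           (Hmeet _ _ (subset_card_lt_doubleton _ _ a b A_gt2) Hm)).
  intros s [s0 [[-> | ->] <-]]; assumption.
Qed.

Lemma ab_morphism_join2 (b c j : P) (x : X) :
  is_join le (doubleton b c) j -> h j x -> h b x \/ h c x.
Proof.
  intros Hj Hx. destruct h_morphism as [_ [_ Hjoin]].
  destruct (pset_join_within_union _ _ _ _
              (Hjoin _ _ (subset_card_lt_doubleton _ _ b c B_gt2) Hj) Hx)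
    as [s [[s0 [[-> | ->] <-]] Hs]]; auto.
Qed.

Lemma ab_morphism_distrib (a b c m j : P) :
  is_meet le (doubleton a b) m -> is_meet le (doubleton a c) m ->
  is_join le (doubleton b c) j -> le a j -> psubset (h a) (h m).
Proof.
  intros Hab Hac Hbc Haj x Hx.
  destruct h_morphism as [h_mono _].
  destruct (ab_morphism_join2 b c j x Hbc (h_mono a j Haj x Hx)) as [Hb | Hc].
  - exact (ab_morphism_meet2 a b m x Hab Hx Hb).
  - exact (ab_morphism_meet2 a c m x Hac Hx Hc).
Qed.

End RepresentableDistributive.

Lemma ab_representable_distrib (A B P : Type) (le : P -> P -> Prop) (a b c m j : P) :
  card_gt2 A -> card_gt2 B -> ab_representable A B P le ->
  is_meet le (doubleton a b) m -> is_meet le (doubleton a c) m ->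
  is_join le (doubleton b c) j -> le a j -> le a m.
Proof.
  intros HA HB [X [h [Hmor Hemb]]] Hab Hac Hbc Haj.
  apply Hemb. exact (ab_morphism_distrib A B P X le h Hmor HA HB a b c m j Hab Hac Hbc Haj).
Qed.

Definition pempty {X : Type} : pset X := fun _ => False.
Definition pfull {X : Type} : pset X := fun _ => True.
Definition psingleton {X : Type} (t : X) : pset X := fun x => x = t.

Definition diamond (X : Type) (U : pset X) : Prop :=
  U = pempty \/ U = pfull \/ exists t, U = psingleton t.

Definition diamond_bot (X : Type) : {U | diamond X U} := exist _ pempty (or_introl eq_refl).
Definition diamond_top (X : Type) : {U | diamond X U} :=
  exist _ pfull (or_intror (or_introl eq_refl)).
Definition diamond_atom {X : Type} (t : X) : {U | diamond X U} :=
  exist _ (psingleton t) (or_intror (or_intror (ex_intro _ t eq_refl))).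

Lemma diamond_meet_atoms (X : Type) (s t : X) : s <> t ->
  is_meet (induced psubset (diamond X)) (doubleton (diamond_atom s) (diamond_atom t))
    (diamond_bot X).
Proof.
  intros Hst. split.
  - intros U _ x [].
  - intros U HU x Hx.
    apply Hst. unfold induced in HU.
    rewrite <- (HU _ (or_introl eq_refl) x Hx), <- (HU _ (or_intror eq_refl) x Hx).
    reflexivity.
Qed.

Lemma diamond_join_atoms (X : Type) (s t : X) : s <> t ->
  is_join (induced psubset (diamond X)) (doubleton (diamond_atom s) (diamond_atom t))
    (diamond_top X).
Proof.
  intros Hst. split.
  - intros U _ x _; exact I.
  - intros [U HU] Hupp x _. unfold induced in *; cbn in *.
    assert (Hs : U s) by exact (Hupp _ (or_introl eq_refl) s eq_refl).
    assert (Ht : U t) by exact (Hupp _ (or_intror eq_refl) t eq_refl).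
    destruct HU as [-> | [-> | [r ->]]].
    + destruct Hs.
    + exact I.
    + destruct (Hst (eq_trans Hs (eq_sym Ht))).
Qed.

Theorem proposition2p8 :
  forall (A B : Type), card_gt2 A -> card_gt2 B ->
  exists (P : Type) (leP : P -> P -> Prop),
    is_poset P leP /\ ab_representable A B P leP /\
    exists P' : P -> Prop,
      ~ ab_representable A B {x : P | P' x} (induced leP P').
Proof.
  intros A B HA HB.
  exists (pset nat), psubset.
  split; [apply pset_is_poset | split; [apply pset_ab_representable |]].
  exists (diamond nat). intros Hrep.
  assert (H0_le_bot : induced psubset (diamond nat) (diamond_atom 0) (diamond_bot nat)).
  { apply (ab_representable_distrib A B _ _ _ (diamond_atom 1) (diamond_atom 2) _
             (diamond_top nat) HA HB Hrep).
    - apply diamond_meet_atoms; discriminate.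
    - apply diamond_meet_atoms; discriminate.
    - apply diamond_join_atoms; discriminate.
    - intros x _; exact I. }
  exact (H0_le_bot 0 eq_refl).
Qed.
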